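(* Let $n\in\mathbb{N}_0$ and let $p\in\mathbb{N}_0$ with $p\ge n$. Let $\psi_{p,n}$ denote the $n$-th primitive of the Legendre polynomial $L_p$. Then \[ \int_{-1}^1\psi_{p,n}(x)^2\,dx=\frac{2^{n+1}}{n!}\,\frac{1}{2p+1}\prod_{k=1}^n\frac{2k-1}{(2p+1)^2-4k^2}. \]
   Context: $L_j$ denotes the Legendre polynomial of degree $j$ on $(-1,1)$, normalized so that $L_j(1)=1$ and $\int_{-1}^1L_iL_j=\frac{2}{2i+1}\delta_{ij}$. The $n$-th primitive is defined recursively by $\psi_{i,0}:=L_i$ and $\psi_{i,n}(x):=\int_{-1}^x\psi_{i,n-1}(\zeta)\,d\zeta$ for $n\ge1$. *)

From HB Require Import structures.
From mathcomp Require Import all_boot all_order all_algebra.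
From mathcomp Require Import all_classical all_reals all_analysis.
Set Implicit Arguments. Unset Strict Implicit. Unset Printing Implicit Defensive.
Import Order.TTheory GRing.Theory Num.Theory.
Import numFieldNormedType.Exports.
Local Open Scope classical_set_scope.
Local Open Scope ring_scope.

(* Legendre polynomial of degree j (Rodrigues' formula):
   L_j = 1/(2^j j!) d^j/dx^j (x^2 - 1)^j, so that L_j(1) = 1. *)
Definition legendre (R : realType) (j : nat) : {poly R} :=
  ((2 ^+ j * (j`!)%:R)^-1) *: (('X ^+ 2 - 1) ^+ j)^`(j).

Fixpoint psi (R : realType) (i n : nat) : R -> R :=
  match n with
  | 0 => fun x => (legendre R i).[x]
  | n'.+1 => fun x =>
      (\int[@lebesgue_measure R]_(t in `[-1, x]) @psi R i n' t)%R
  end.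

From HB Require Import structures.
From mathcomp Require Import all_boot all_order all_algebra.
From mathcomp Require Import all_classical all_reals all_analysis.
From mathcomp Require Import ring lra.
Set Implicit Arguments. Unset Strict Implicit. Unset Printing Implicit Defensive.
Import Order.TTheory GRing.Theory Num.Theory.
Import numFieldNormedType.Exports.
Local Open Scope classical_set_scope.
Local Open Scope ring_scope.

(* By Rodrigues' formula, psi_{p,n} = D^(p-n) (x^2 - 1)^p / (2^p p!) for n <= p,
   a polynomial vanishing at -1 and 1 when n >= 1; f = psi_{p,n+1} satisfies
   (x^2 - 1) f'' = 2n x f' + (p-n)(p+n+1) f. Integrating this equation against
   f and against x f', by parts, gives two linear relations between the
   integrals of f^2, f'^2 and x^2 f'^2; eliminating x^2 f'^2 expresses
   int psi_{p,n}^2 as an explicit multiple of int psi_{p,n+1}^2. The formula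
   then follows by induction on n from the Legendre norm int L_p^2 = 2/(2p+1),
   itself obtained by p integrations by parts and the Wallis integral
   int (x^2 - 1)^k. *)

Section LegendrePrimitives.
Variable R : realFieldType.
Implicit Types f g q : {poly R}.

Definition prim q : {poly R} :=
  \poly_(i < (size q).+1) (if i is j.+1 then q`_j / j.+1%:R else 0).

Lemma coef_prim q i : (prim q)`_i = if i is j.+1 then q`_j / j.+1%:R else 0.
Proof.
rewrite coef_poly; case: ltnP => //; case: i => // j; rewrite ltnS => ?.
by rewrite nth_default ?mul0r.
Qed.

Lemma deriv_prim q : (prim q)^`() = q.
Proof.
by apply/polyP => i; rewrite coef_deriv coef_prim -[_ *+ _]mulr_natr divfK ?pnatr_eq0.
Qed.

Lemma prim_deriv q : prim q^`() = q - (q`_0)%:P.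
Proof.
apply/polyP => -[|i]; rewrite coef_prim coefB coefC /= ?subrr //.
by rewrite coef_deriv -[_ *+ _]mulr_natr mulfK ?pnatr_eq0 ?subr0.
Qed.

Definition pint q : R := (prim q).[1] - (prim q).[-1].

Lemma pintDZ a f g : pint (a *: f + g) = a * pint f + pint g.
Proof.
rewrite /pint; have -> : prim (a *: f + g) = a *: prim f + prim g.
  apply/polyP => -[|i]; rewrite !(coefD, coefZ, coef_prim) ?mulr0 ?addr0 //.
  by rewrite mulrDl mulrA.
rewrite !(hornerD, hornerZ); ring.
Qed.

HB.instance Definition _ :=
  GRing.isLinear.Build R {poly R} R *%R pint pintDZ.

Lemma pintD f g : pint (f + g) = pint f + pint g. Proof. exact: linearD. Qed.

Lemma pintB f g : pint (f - g) = pint f - pint g. Proof. exact: linearB. Qed.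

Lemma pintZ a f : pint (a *: f) = a * pint f. Proof. exact: linearZ. Qed.

Lemma pint_deriv f : pint f^`() = f.[1] - f.[-1].
Proof. by rewrite /pint prim_deriv !(hornerD, hornerN, hornerC); ring. Qed.

Lemma pint_deriv_mul f g :
  pint (f^`() * g) = (f * g).[1] - (f * g).[-1] - pint (f * g^`()).
Proof. by rewrite -pint_deriv derivM pintD addrK. Qed.

Lemma pint_deriv_sqr_ode f (nu lambda : R) :
    f.[1] = 0 -> f.[-1] = 0 ->
    ('X^2 - 1) * f^`()^`() - (2 * nu) *: ('X * f^`()) - lambda *: f = 0 ->
  (4 * nu + 2) * pint (f^`() ^+ 2)
    = (nu + 1) * (4 * lambda - 4 * nu - 3) * pint (f ^+ 2).
Proof.
move=> f1 fN1 ode.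
(* Integrating the equation against (4 nu + 3) f - 2 X f' by parts leaves
   the target combination plus h', and h vanishes at -1 and 1. *)
pose h : {poly R} := ((4 * nu + 3) * (nu + 1) - lambda) *: ('X * f * f)
  - (4 * nu + 3) *: (('X^2 - 1) * f^`() * f) + ('X^3 - 'X) * f^`() * f^`().
have h_pm1 : h.[1] = 0 /\ h.[-1] = 0.
  by rewrite /h !hornerE /= f1 fN1; split; ring.
have dh : (4 * nu + 2) *: f^`() ^+ 2
             - ((nu + 1) * (4 * lambda - 4 * nu - 3)) *: f ^+ 2
           = h^`() + ((4 * nu + 3) *: f - 2 *: ('X * f^`()))
             * (('X^2 - 1) * f^`()^`() - (2 * nu) *: ('X * f^`()) - lambda *: f)
           :> {poly R}.
  by rewrite /h !poly.derivE -!mul_polyC; ring.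
move: dh; rewrite ode mulr0 addr0 => /(congr1 pint).
rewrite pintB !pintZ pint_deriv.
by case: h_pm1 => -> -> /eqP; rewrite subrr subr_eq0 => /eqP.
Qed.

Lemma dvdp_deriv_XsubC_exp (a : R) j f :
  ('X - a%:P) ^+ j %| f -> ('X - a%:P) ^+ j.-1 %| f^`().
Proof.
case: j => [_|j]; first by rewrite /= expr0 dvd1p.
move=> /dvdpP[q ->]; rewrite derivM deriv_exp derivXsubC mul1r exprS /=.
apply: dvdp_add; first exact/dvdp_mull/dvdp_mulIr.
by rewrite -mulr_natr; apply/dvdp_mull/dvdp_mulr/dvdpp.
Qed.

Lemma dvdp_derivn_XsubC_exp (a : R) m k f :
  ('X - a%:P) ^+ m %| f -> ('X - a%:P) ^+ (m - k) %| f^`(k).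
Proof.
move=> dvd_f; elim: k => [|k IHk]; first by rewrite subn0 derivn0.
by rewrite subnS derivnS; apply: dvdp_deriv_XsubC_exp.
Qed.

Definition rodrigues p : {poly R} := ('X^2 - 1) ^+ p.

Lemma rodrigues_derivn_pm1 p k : (k < p)%N ->
  ((rodrigues p)^`(k)).[1] = 0 /\ ((rodrigues p)^`(k)).[-1] = 0.
Proof.
move=> lt_kp; have root_derivn a : ('X - a%:P) ^+ p %| rodrigues p ->
    root (rodrigues p)^`(k) a.
  move=> /(dvdp_derivn_XsubC_exp k)/root_dvdp; apply.
  by rewrite -(subnSK lt_kp) root_exp_XsubC.
have factor : rodrigues p = ('X - 1%:P) ^+ p * ('X - (-1)%:P) ^+ p.
  by rewrite /rodrigues -exprMn polyCN opprK; congr (_ ^+ _); ring.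
split; apply/rootP/root_derivn; rewrite factor.
  exact: dvdp_mulIl.
exact: dvdp_mulIr.
Qed.

Lemma rodrigues_ode p :
  ('X^2 - 1) * (rodrigues p)^`() = (2 * p%:R) *: ('X * rodrigues p).
Proof.
rewrite /rodrigues deriv_exp !poly.derivE -mul_polyC; case: p => [|p] /=.
  by rewrite !mulr0n !mulr0 mul0r.
rewrite [_ ^+ p.+1]exprS; ring.
Qed.

Lemma derivn_ode g (k : R) m :
    ('X^2 - 1) * g^`() = (2 * k) *: ('X * g) ->
  ('X^2 - 1) * g^`(m.+2) - (2 * (k - m.+1%:R)) *: ('X * g^`(m.+1))
    - (m.+1%:R * (2 * k - m%:R)) *: g^`(m) = 0.
Proof.
move=> /eqP; rewrite -subr_eq0 => /eqP ode; elim: m => [|m IHm].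
  move/(congr1 deriv): ode; rewrite deriv0 => <-.
  by rewrite !derivnS derivn0 !poly.derivE -!mul_polyC; ring.
move/(congr1 deriv): IHm; rewrite deriv0 => <-.
by rewrite !poly.derivE -!derivnS -!mul_polyC; ring.
Qed.

(* The n-th primitive of the Legendre polynomial of degree p only for n <= p:
   beyond that the truncated subtraction p - n stays at 0. *)
Definition psi_poly p n : {poly R} :=
  (2 ^+ p * (p`!)%:R)^-1 *: (rodrigues p)^`(p - n).

Lemma deriv_psi_poly p n : (n < p)%N -> (psi_poly p n.+1)^`() = psi_poly p n.
Proof. by move=> lt_np; rewrite derivZ -derivnS subnSK. Qed.

Lemma psi_poly_pm1 p n : (n < p)%N ->
  (psi_poly p n.+1).[1] = 0 /\ (psi_poly p n.+1).[-1] = 0.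
Proof.
move=> lt_np; have lt_p : (p - n.+1 < p)%N.
  by rewrite ltn_subrL (leq_ltn_trans (leq0n n) lt_np).
by have [v1 vN1] := rodrigues_derivn_pm1 lt_p; rewrite !hornerZ v1 vN1 mulr0.
Qed.

Lemma psi_poly_ode p n : (n < p)%N ->
  ('X^2 - 1) * (psi_poly p n.+1)^`()^`() - (2 * n%:R) *: ('X * (psi_poly p n.+1)^`())
    - ((p%:R - n%:R) * (p%:R + n%:R + 1)) *: psi_poly p n.+1 = 0.
Proof.
move=> lt_np; have le_np := ltnW lt_np.
have := derivn_ode (p - n.+1) (rodrigues_ode p).
rewrite (subnSK lt_np) !natrB // => ode.
rewrite /psi_poly !derivZ -!derivnS (subnSK lt_np).
rewrite -(scaler0 _ (2 ^+ p * p`!%:R)^-1) -ode -!mul_polyC; ring.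
Qed.

Lemma pint_psi_poly_sqrS p n : (n < p)%N ->
  pint (psi_poly p n.+1 ^+ 2)
    = 2 / n.+1%:R * ((2 * n.+1%:R - 1) / ((2 * p%:R + 1) ^+ 2 - 4 * n.+1%:R ^+ 2))
      * pint (psi_poly p n ^+ 2).
Proof.
move=> lt_np; have [v1 vN1] := psi_poly_pm1 lt_np.
have n_ge0 := ler0n R n; have le_np : n%:R + 1 <= p%:R :> R by rewrite natr1 ler_nat.
have D_gt0 : 0 < (2 * p%:R + 1) ^+ 2 - 4 * n.+1%:R ^+ 2 :> R.
  rewrite -natr1 (_ : _ - _ = (2 * (p%:R - n%:R - 1) + 1) * (2 * p%:R + 2 * n%:R + 3)).
    by apply: mulr_gt0; lra.
  by ring.
have nz : (n%:R + 1) * ((2 * p%:R + 1) ^+ 2 - 4 * n.+1%:R ^+ 2) != 0 :> R.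
  by rewrite mulf_neq0 ?(lt0r_neq0 D_gt0) // natr1 pnatr_eq0.
have := pint_deriv_sqr_ode v1 vN1 (psi_poly_ode lt_np).
rewrite deriv_psi_poly // (_ : 4 * _ - _ - 3 = (2 * p%:R + 1) ^+ 2 - 4 * n.+1%:R ^+ 2).
  move=> E; apply/(mulfI nz); rewrite -E; field.
  by rewrite nat1r (lt0r_neq0 D_gt0) pnatr_eq0.
by rewrite -natr1; ring.
Qed.

Lemma pint_rodrigues_derivnM p j g : (j <= p)%N ->
  pint ((rodrigues p)^`(j) * g) = (-1) ^+ j * pint (rodrigues p * g^`(j)).
Proof.
elim: j g => [|j IHj] g le_jp; first by rewrite !derivn0 expr0 mul1r.
have [v1 vN1] := rodrigues_derivn_pm1 le_jp.
rewrite derivnS pint_deriv_mul !hornerM v1 vN1 !mul0r subrr sub0r.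
by rewrite (IHj _ (ltnW le_jp)) -derivSn exprS mulN1r mulNr.
Qed.

Lemma rodrigues_derivn_double p : (rodrigues p)^`(p.*2) = ((p.*2)`!)%:R%:P.
Proof.
have monic_u : rodrigues p \is monic by apply/monic_exp/monic_Xn_sub_1.
have size_u : size (rodrigues p) = (p.*2).+1.
  rewrite -[size _]prednK ?size_poly_gt0 ?monic_neq0 //.
  by rewrite size_exp size_Xn_sub_1 // mul2n.
apply/polyP => -[|i]; rewrite coef_derivn coefC /=.
  by rewrite addn0 ffactnn -{1}[p.*2]/(p.*2.+1).-1 -size_u -lead_coefE (monicP monic_u).
by rewrite nth_default ?mul0rn // size_u addnS ltnS leq_addr.
Qed.

Lemma pint_rodrigues k :
  pint (rodrigues k) = (-1) ^+ k * 2 ^+ k.*2.+1 * (k`!)%:R ^+ 2 / (k.*2.+1)`!%:R.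
Proof.
elim: k => [|k IHk].
  rewrite /rodrigues expr0 -derivX pint_deriv !hornerX.
  by rewrite -[RHS]/((-1) ^+ 0 * 2 ^+ 1 * 1%:R ^+ 2 / 1%:R); field.
have [v1 vN1] := rodrigues_derivn_pm1 (ltn0Sn k); rewrite !derivn0 in v1 vN1.
have := pint_deriv_mul 'X (rodrigues k.+1).
rewrite derivX mul1r !hornerM v1 vN1 !mulr0 subrr sub0r.
have -> : 'X * (rodrigues k.+1)^`() = (2 * k.+1%:R) *: (rodrigues k.+1 + rodrigues k).
  by rewrite /rodrigues deriv_exp !poly.derivE -mul_polyC [_ ^+ k.+1]exprS; ring.
rewrite pintZ pintD IHk => E.
have k_ge0 := ler0n R k.
have nz : 2 * k.+1%:R + 1 != 0 :> R by rewrite lt0r_neq0 //; lra.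
apply: (mulfI nz); rewrite mulrDl mul1r {2}E.
rewrite doubleS !factS !natrM -!mul2n !exprS; field.
by rewrite pnatr_eq0 -lt0n fact_gt0 !lt0r_neq0 //=; lra.
Qed.

Lemma pint_psi_poly0_sqr p : pint (psi_poly p 0 ^+ 2) = 2 / (2 * p%:R + 1).
Proof.
rewrite /psi_poly subn0 expr2 -scalerAl -scalerAr !pintZ pint_rodrigues_derivnM //.
have -> : ((rodrigues p)^`(p))^`(p) = (rodrigues p)^`(p.*2).
  by rewrite -addnn /derivn iterD.
rewrite rodrigues_derivn_double [rodrigues p * _]mulrC mul_polyC pintZ pint_rodrigues.
rewrite -signr_odd -addnn exprS exprD factS natrM.
have p_gt0 : 0 < 2 * p%:R + 1 :> R by have := ler0n R p; lra.
(* The parity split lets [field] see that the two signs cancel. *)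
case: (odd p) => /=; field; rewrite (lt0r_neq0 p_gt0) !pnatr_eq0 -!lt0n !fact_gt0.
  all: by rewrite expf_neq0 // pnatr_eq0.
Qed.

Lemma pint_psi_poly_sqr p n : (n <= p)%N ->
  pint (psi_poly p n ^+ 2)
    = (2 ^+ n.+1 / (n`!)%:R) * (1 / (2 * p%:R + 1))
      * \prod_(1 <= k < n.+1)
          ((2 * k%:R - 1) / ((2 * p%:R + 1) ^+ 2 - 4 * k%:R ^+ 2)).
Proof.
elim: n => [|n IHn] le_np.
  by rewrite pint_psi_poly0_sqr big_geq // fact0 divr1 expr1 mulr1 mul1r.
rewrite pint_psi_poly_sqrS // (IHn (ltnW le_np)) [in RHS]big_nat_recr //=.
rewrite factS natrM (exprS 2 n.+1).
(* Kept opaque, so that [field] needs no sign condition on its denominator. *)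
set t := (2 * n.+1%:R - 1) / _.
have p_ge0 := ler0n R p.
by field; rewrite nat1r !pnatr_eq0 -lt0n fact_gt0 andbT lt0r_neq0 //; lra.
Qed.

End LegendrePrimitives.

Section Integration.
Variable R : realType.

Lemma Rintegral_deriv_poly (F : {poly R}) (a b : R) : a <= b ->
  \int[@lebesgue_measure R]_(x in `[a, b]) (F^`()).[x] = F.[b] - F.[a].
Proof.
rewrite le_eqVlt => /predU1P[<-|lt_ab].
  by rewrite set_itv1 Rintegral_set1 subrr.
rewrite /Rintegral (@continuous_FTC2 _ _ (horner F)) //=.
- by apply/continuous_subspaceT => x; exact: continuous_horner.
- split=> [x _| |].
  + exact: derivable_horner.
  + by apply: cvg_at_right_filter; exact: continuous_horner.
  + by apply: cvg_at_left_filter; exact: continuous_horner.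
- by move=> x _; rewrite -derivE.
Qed.

Lemma Rintegral_pint (q : {poly R}) :
  \int[@lebesgue_measure R]_(x in `[-1, 1]) q.[x] = pint q.
Proof. by rewrite -(deriv_prim q) Rintegral_deriv_poly ?lerN10 // pint_deriv. Qed.

Lemma psi_psi_poly p n x : (n <= p)%N -> -1 <= x -> psi p n x = (psi_poly R p n).[x].
Proof.
elim: n x => [|n IHn] x le_np x_ge /=; first by rewrite /psi_poly subn0.
transitivity (\int[@lebesgue_measure R]_(t in `[-1, x]) ((psi_poly R p n.+1)^`()).[t]).
  apply: eq_Rintegral => t; rewrite inE /= in_itv /= => /andP[t_ge _].
  by rewrite deriv_psi_poly // IHn // ltnW.
by rewrite Rintegral_deriv_poly // (psi_poly_pm1 R le_np).2 subr0.
Qed.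

End Integration.

Theorem lemma4 (R : realType) (n p : nat) (hpn : (n <= p)%N) :
  \int[@lebesgue_measure R]_(x in `[-1, 1]) (@psi R p n x ^+ 2)
  = (2 ^+ n.+1 / (n`!)%:R) * (1 / (2 * p%:R + 1))
    * \prod_(1 <= k < n.+1)
        ((2 * k%:R - 1) / ((2 * p%:R + 1) ^+ 2 - 4 * k%:R ^+ 2)).
Proof.
rewrite -pint_psi_poly_sqr // -Rintegral_pint.
apply: eq_Rintegral => x; rewrite inE /= in_itv /= => /andP[x_ge _].
by rewrite psi_psi_poly // horner_exp.
Qed.
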